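(* Let $\mathcal A$ be a Banach algebra and $I$ a closed two-sided ideal of $\mathcal A$ with $\mathcal A^2\subseteq I$. If $\mathcal A$ is $I$-weakly amenable, then $\mathcal A^2$ is dense in $I$.
   Context: $\mathcal A^2$ denotes the linear span of $\{ab:a,b\in\mathcal A\}$. $I^*$ is a Banach $\mathcal A$-bimodule with $\langle x,a\cdot f\rangle=\langle xa,f\rangle$, $\langle x,f\cdot a\rangle=\langle ax,f\rangle$. $\mathcal A$ is $I$-weakly amenable if every derivation $D:\mathcal A\to I^*$ (continuous linear map with $D(ab)=a\cdot D(b)+D(a)\cdot b$) is inner, i.e. $D(a)=a\cdot f-f\cdot a$ for some $f\in I^*$. *)

From HB Require Import structures.
From mathcomp Require Import all_boot all_order all_algebra.
From mathcomp Require Import all_classical all_reals all_analysis.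
From mathcomp Require Import complex.
Set Implicit Arguments. Unset Strict Implicit. Unset Printing Implicit Defensive.
Import Order.TTheory GRing.Theory Num.Theory.
Import numFieldNormedType.Exports.
Local Open Scope classical_set_scope.
Local Open Scope ring_scope.

Section Defs.
Variables (K : numFieldType) (A : normedModType K).

(* mul makes A a normed (possibly non-unital) algebra over K;
   together with completeness of A this is a Banach algebra. *)
Definition banach_algebra_mul (mul : A -> A -> A) : Prop :=
  [/\ (forall a b c, mul a (mul b c) = mul (mul a b) c),
      (forall a b c, mul a (b + c) = mul a b + mul a c),
      (forall a b c, mul (a + b) c = mul a c + mul b c),
      (forall (k : K) a b, mul (k *: a) b = k *: mul a b) /\
      (forall (k : K) a b, mul a (k *: b) = k *: mul a b)
    & (forall a b, `|mul a b| <= `|a| * `|b|)].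

Definition closed_ideal (mul : A -> A -> A) (I : set A) : Prop :=
  [/\ I 0,
      (forall x y, I x -> I y -> I (x + y)),
      (forall (k : K) x, I x -> I (k *: x)),
      (forall a x, I x -> I (mul a x) /\ I (mul x a))
    & closed I].

Definition sq_span (mul : A -> A -> A) : set A :=
  [set y | exists n (c : 'I_n -> K) (a b : 'I_n -> A),
           y = \sum_(i < n) c i *: mul (a i) (b i)].

(* Elements of the dual I^* are represented by functions f : A -> K whose
   restriction to I is linear and continuous (bounded); two such functions
   represent the same element of I^* iff they agree on I. *)
Definition in_dual (I : set A) (f : A -> K) : Prop :=
  [/\ (forall x y, I x -> I y -> f (x + y) = f x + f y),
      (forall (k : K) x, I x -> f (k *: x) = k * f x)
    & exists M : K, forall x, I x -> `|f x| <= M * `|x|].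

(* A continuous derivation D : A -> I^*, where
   <x, a.f> = <xa, f> and <x, f.a> = <ax, f>. *)
Definition I_derivation (mul : A -> A -> A) (I : set A) (D : A -> A -> K)
  : Prop :=
  [/\ (forall a, in_dual I (D a)),
      (forall a b x, I x -> D (a + b) x = D a x + D b x),
      (forall (k : K) a x, I x -> D (k *: a) x = k * D a x),
      (exists M : K, forall a x, I x -> `|D a x| <= M * `|a| * `|x|)
    & (forall a b x, I x ->
         D (mul a b) x = D b (mul x a) + D a (mul b x))].

Definition I_inner (mul : A -> A -> A) (I : set A) (D : A -> A -> K) : Prop :=
  exists f, in_dual I f /\
    forall a x, I x -> D a x = f (mul x a) - f (mul a x).

Definition I_weakly_amenable (mul : A -> A -> A) (I : set A) : Prop :=
  forall D, I_derivation mul I D -> I_inner mul I D.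

End Defs.

(* Suppose x0 in I is not in the closure of A^2.  The distance to A^2 is a
   sublinear functional, positive at x0.  By Hahn-Banach (via Zorn's lemma: a
   minimal sublinear functional below a given one is linear) some real-linear
   u below it has u(x0) = dist(x0, A^2); its complexification phi is a bounded
   complex functional vanishing on A^2 with phi(x0) <> 0.  Since phi kills all
   products, D(a) = phi(a) phi is a continuous derivation A -> I^*.  An inner
   derivation vanishes on the diagonal, D(x)(x) = f(x x) - f(x x) = 0, whereas
   D(x0)(x0) = phi(x0)^2 <> 0. *)

From HB Require Import structures.
From mathcomp Require Import all_boot all_order all_algebra.
From mathcomp Require Import all_classical all_reals all_analysis.
From mathcomp Require Import complex.
From mathcomp Require Import ring lra.
Set Implicit Arguments. Unset Strict Implicit. Unset Printing Implicit Defensive.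
Import Order.TTheory GRing.Theory Num.Theory.
Import numFieldNormedType.Exports.
Local Open Scope classical_set_scope.
Local Open Scope ring_scope.
Local Open Scope complex_scope.

Section InfBounds.
Variable R : realType.

Lemma inf_leD (E F G : set R) : nonempty E -> nonempty F -> has_lbound G ->
  (forall e f, E e -> F f -> exists2 g, G g & g <= e + f) ->
  inf G <= inf E + inf F.
Proof.
move=> E0 F0 lbG domG.
have infG_le e f : E e -> F f -> inf G <= e + f.
  by move=> Ee Ff; have [g Gg gle] := domG e f Ee Ff; exact: le_trans (ge_inf lbG Gg) gle.
have infG_subF_le f : F f -> inf G - f <= inf E.
  by move=> Ff; apply: lb_le_inf => // e Ee; have := infG_le e f Ee Ff; lra.
rewrite -lerBlDl; apply: lb_le_inf => // f Ff; have := infG_subF_le f Ff; lra.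
Qed.

Lemma inf_leZ (E F : set R) (c : R) : 0 < c -> nonempty E -> has_lbound F ->
  (forall e, E e -> exists2 f, F f & f <= c * e) -> inf F <= c * inf E.
Proof.
move=> c0 E0 lbF domF; rewrite -ler_pdivrMl //; apply: lb_le_inf => // e Ee.
rewrite ler_pdivrMl //; have [f Ff fle] := domF e Ee.
exact: le_trans (ge_inf lbF Ff) fle.
Qed.

End InfBounds.

Section Sublinear.
Variables (R : realType) (K : pzRingType) (emb : {rmorphism R -> K}).
Variable V : lmodType K.

Definition sublinear (p : V -> R) : Prop :=
  (forall x y, p (x + y) <= p x + p y) /\
  (forall (t : R) x, 0 < t -> p (emb t *: x) <= t * p x).

Definition real_linear (u : V -> R) : Prop :=
  (forall x y, u (x + y) = u x + u y) /\
  (forall (t : R) x, u (emb t *: x) = t * u x).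

Lemma real_linearN u x : real_linear u -> u (- x) = - u x.
Proof. by case=> _ uZ; have := uZ (-1) x; rewrite rmorphN1 scaleN1r mulN1r. Qed.

Section SublinearTheory.
Variables (p : V -> R) (hp : sublinear p).

Lemma sublinear0 : p 0 = 0.
Proof.
have := hp.1 0 0; rewrite addr0.
have := hp.2 2^-1 0; rewrite scaler0 invr_gt0 => /(_ (ltr0Sn _ 1)).
lra.
Qed.

Lemma sublinear_addN x : 0 <= p x + p (- x).
Proof. by rewrite -sublinear0 -{1}(subrr x); exact: hp.1. Qed.

Lemma sublinearZ (t : R) x : 0 < t -> p (emb t *: x) = t * p x.
Proof.
move=> t0; apply/eqP; rewrite eq_le hp.2 //= -ler_pdivlMl //.
have := hp.2 t^-1 (emb t *: x); rewrite invr_gt0 => /(_ t0).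
by rewrite scalerA -rmorphM mulVf ?gt_eqF // rmorph1 scale1r.
Qed.

End SublinearTheory.

Lemma sublinear_inf (E : V -> set R) :
  (forall x, nonempty (E x)) -> (forall x, has_lbound (E x)) ->
  (forall x y e f, E x e -> E y f -> exists2 g, E (x + y) g & g <= e + f) ->
  (forall (t : R) x e, 0 < t -> E x e -> exists2 f, E (emb t *: x) f & f <= t * e) ->
  sublinear (fun x => inf (E x)).
Proof.
move=> E0 lbE domD domZ; split=> [x y|t x t0].
- by apply: inf_leD => // e f; exact: domD.
- by apply: inf_leZ => // e; exact: domZ.
Qed.

(* A minimal sublinear p lies below tilt p v, which forces p (- v) <= - p v. *)
Definition tilt (p : V -> R) (v : V) (x : V) : R :=
  inf [set p (x + emb t *: v) - t * p v | t in [set t : R | 0 < t]].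

Section Tilt.
Variables (p : V -> R) (hp : sublinear p) (v : V).

Lemma tilt_lb x (t : R) : 0 < t -> - p (- x) <= p (x + emb t *: v) - t * p v.
Proof.
move=> t0; have := hp.1 (x + emb t *: v) (- x).
by rewrite addrC addKr sublinearZ //; lra.
Qed.

Lemma tilt_has_lbound x :
  has_lbound [set p (x + emb t *: v) - t * p v | t in [set t : R | 0 < t]].
Proof. by exists (- p (- x)) => _ [t t0 <-]; exact: tilt_lb. Qed.

Lemma tilt_le_at x (t : R) : 0 < t -> tilt p v x <= p (x + emb t *: v) - t * p v.
Proof. by move=> t0; apply: ge_inf; [exact: tilt_has_lbound | exists t]. Qed.

Lemma tilt_sublinear : sublinear (tilt p v).
Proof.
apply: sublinear_inf => [x|x|x y e f [t1 t10 <-] [t2 t20 <-]|s x e s0 [t t0 <-]].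
- by eexists; exists 1; [exact: ltr01|].
- exact: tilt_has_lbound.
- exists (p (x + y + emb (t1 + t2) *: v) - (t1 + t2) * p v).
    by exists (t1 + t2); [exact: addr_gt0|].
  have := hp.1 (x + emb t1 *: v) (y + emb t2 *: v).
  rewrite rmorphD scalerDl addrACA; lra.
- exists (p (emb s *: x + emb (s * t) *: v) - (s * t) * p v).
    by exists (s * t); [exact: mulr_gt0|].
  by rewrite rmorphM -scalerA -scalerDr sublinearZ // mulrBr mulrA.
Qed.

Lemma tilt_le x : tilt p v x <= p x.
Proof.
apply: le_trans (tilt_le_at x ltr01) _.
by rewrite rmorph1 scale1r mul1r lerBlDr hp.1.
Qed.

Lemma tilt_oppr : tilt p v (- v) <= - p v.
Proof.
apply: le_trans (tilt_le_at (- v) ltr01) _.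
by rewrite rmorph1 scale1r mul1r addNr sublinear0 ?sub0r.
Qed.

End Tilt.

Lemma minimal_sublinear_linear (q : V -> R) : sublinear q ->
  (forall q', sublinear q' -> (forall x, q' x <= q x) -> forall x, q x <= q' x) ->
  real_linear q.
Proof.
move=> hq qmin.
have qN y : q (- y) = - q y.
  have := qmin _ (tilt_sublinear hq y) (tilt_le hq y) (- y).
  have := tilt_oppr hq y; have := sublinear_addN hq y; lra.
have qD x y : q (x + y) = q x + q y.
  apply/eqP; rewrite eq_le hq.1 /=.
  have := hq.1 (- x) (- y); rewrite -opprD !qN; lra.
split=> // t x; have [t0|t0|->] := ltgtP t 0.
- rewrite -(opprK t) rmorphN scaleNr qN sublinearZ ?oppr_gt0 //; lra.
- exact: sublinearZ.
- by rewrite rmorph0 scale0r mul0r sublinear0.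
Qed.

Section Zorn.
Variables (p : V -> R) (hp : sublinear p).

Definition minorant := {q : V -> R | sublinear q /\ forall x, q x <= p x}.

Definition dominates (q1 q2 : minorant) : bool :=
  `[< forall x, sval q2 x <= sval q1 x >].

Definition minorant_self : minorant := exist _ p (conj hp (fun x => lexx (p x))).

Lemma minorant_sublinear (q : minorant) : sublinear (sval q).
Proof. exact: (svalP q).1. Qed.

Lemma minorant_le (q : minorant) x : sval q x <= p x.
Proof. exact: (svalP q).2. Qed.

Lemma minorant_lb (q : minorant) x : - p (- x) <= sval q x.
Proof.
by have := sublinear_addN (minorant_sublinear q) x; have := minorant_le q (- x); lra.
Qed.

Lemma minorant_chain_ub (C : set minorant) :
  total_on C dominates -> exists t, forall s, C s -> dominates s t.
Proof.
move=> totC; have [->|/set0P [s0 Cs0]] := eqVneq C set0.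
  by exists minorant_self.
pose E x := [set sval s x | s in C].
have lbE x : has_lbound (E x) by exists (- p (- x)) => _ [s _ <-]; exact: minorant_lb.
have infE_sub : sublinear (fun x => inf (E x)).
  apply: sublinear_inf => [x|//|x y e f [s1 Cs1 <-] [s2 Cs2 <-]|t x e t0 [s Cs <-]].
  - by exists (sval s0 x), s0.
  - have [/asboolP le21|/asboolP le12] := totC s1 s2 Cs1 Cs2.
    + exists (sval s2 (x + y)); first by exists s2.
      by apply: le_trans ((minorant_sublinear s2).1 x y) _; rewrite lerD2r le21.
    + exists (sval s1 (x + y)); first by exists s1.
      by apply: le_trans ((minorant_sublinear s1).1 x y) _; rewrite lerD2l le12.
  - exists (sval s (emb t *: x)); first by exists s.
    exact: (minorant_sublinear s).2.
have infE_le x : inf (E x) <= p x.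
  by apply: le_trans (ge_inf (lbE x) _) (minorant_le s0 x); exists s0.
exists (exist _ (fun x => inf (E x)) (conj infE_sub infE_le)) => s Cs.
apply/asboolP => x.
by apply: ge_inf; [exact: lbE | exists s].
Qed.

Lemma exists_linear_below : exists u, real_linear u /\ forall x, u x <= p x.
Proof.
have dominates_refl q : dominates q q by apply/asboolP => x; exact: lexx.
have dominates_trans q1 q2 q3 : dominates q1 q2 -> dominates q2 q3 -> dominates q1 q3.
  move=> /asboolP h12 /asboolP h23; apply/asboolP => x.
  exact: le_trans (h23 x) (h12 x).
have [[q [hq qp]] qmin] :=
  ZL_preorder minorant_self dominates_refl dominates_trans minorant_chain_ub.
exists q; split=> //; apply: minimal_sublinear_linear => // q' hq' q'q.
have q'p x : q' x <= p x by exact: le_trans (q'q x) (qp x).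
have /qmin /asboolP // : dominates (exist _ q (conj hq qp)) (exist _ q' (conj hq' q'p)).
by apply/asboolP.
Qed.

End Zorn.

Lemma hahn_banach (p : V -> R) (x0 : V) : sublinear p ->
  exists u, [/\ real_linear u, forall x, u x <= p x & u x0 = p x0].
Proof.
move=> hp; have [u [lu ule]] := exists_linear_below (tilt_sublinear hp x0).
have up x : u x <= p x by exact: le_trans (ule x) (tilt_le hp x0 x).
exists u; split=> //; apply/eqP; rewrite eq_le up /=.
by have := le_trans (ule (- x0)) (tilt_oppr hp x0); rewrite real_linearN //; lra.
Qed.

End Sublinear.

Section Complexification.
Variables (R : realType) (V : lmodType R[i]).

Definition complexify (u : V -> R) (x : V) : R[i] := (u x)%:C - 'i%C * (u ('i%C *: x))%:C.

Lemma Re_complexify u x : complex.Re (complexify u x) = u x.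
Proof. by rewrite /= mul0r mulr0 subrr subr0. Qed.

Variables (u : V -> R) (lu : real_linear (real_complex R) u).

Lemma complexifyD x y : complexify u (x + y) = complexify u x + complexify u y.
Proof. by rewrite /complexify scalerDr !lu.1 !rmorphD; ring. Qed.

Lemma complexifyZ k x : complexify u (k *: x) = k * complexify u x.
Proof.
set a := complex.Re k; set b := complex.Im k.
have kxE : k *: x = a%:C *: x + b%:C *: ('i%C *: x).
  by rewrite {1}[k]complexE scalerDl scalerA mulrC.
have ikxE : 'i%C *: (k *: x) = a%:C *: ('i%C *: x) + (- b)%:C *: x.
  rewrite kxE scalerDr !scalerA mulrC; congr (_ + _).
  by rewrite mulrAC -expr2 sqr_i mulN1r rmorphN.
rewrite /complexify ikxE kxE !lu.1 !lu.2 !rmorphD !rmorphM rmorphN [k]complexE.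
set U := (u x)%:C; set W := (u ('i%C *: x))%:C.
have -> : (a%:C + 'i%C * b%:C) * (U - 'i%C * W) =
    a%:C * U + b%:C * W * - 'i%C ^+ 2 - 'i%C * (a%:C * W - b%:C * U) by ring.
by rewrite sqr_i opprK mulr1 mulNr.
Qed.

End Complexification.

Lemma normc_real (R : realType) (r : R) : `|r%:C| = `|r|%:C.
Proof. by rewrite normc_def /= expr0n addr0 sqrtr_sqr. Qed.

Lemma normc_i (R : realType) : `|'i%C : R[i]| = 1.
Proof. by rewrite normc_def /= expr0n add0r expr1n sqrtr1. Qed.

Lemma ger0_complexE (R : realType) (z : R[i]) : 0 <= z -> z = (complex.Re z)%:C.
Proof. by case: z => a b; rewrite lecE /= => /andP[/eqP -> _]. Qed.

Section RealNorm.
Variables (R : realType) (A : normedModType R[i]).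

Definition rnorm (x : A) : R := complex.Re `|x|.

Lemma rnormE x : `|x| = (rnorm x)%:C.
Proof. exact/ger0_complexE/normr_ge0. Qed.

Lemma rnorm_ge0 x : 0 <= rnorm x.
Proof. by have := normr_ge0 x; rewrite rnormE lecR. Qed.

Lemma rnormD x y : rnorm (x + y) <= rnorm x + rnorm y.
Proof. by have := ler_normD x y; rewrite !rnormE -rmorphD lecR. Qed.

Lemma rnormN x : rnorm (- x) = rnorm x.
Proof. by rewrite /rnorm normrN. Qed.

Lemma rnormZ (k : R[i]) x : rnorm (k *: x) = complex.Re `|k| * rnorm x.
Proof. by rewrite /rnorm normrZ rnormE [`|k|]ger0_complexE // -rmorphM. Qed.

Lemma complexify_norm_le (u : A -> R) :
  (forall x, `|u x| <= rnorm x) -> forall x, `|complexify u x| <= 2 * `|x|.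
Proof.
move=> u_le x; apply: le_trans (ler_normB _ _) _.
rewrite normrM normc_i mul1r !normc_real rnormE -rmorphD.
rewrite -[2 : R[i]](rmorph_nat (real_complex R)) -rmorphM lecR.
by have := u_le x; have := u_le ('i%C *: x); rewrite rnormZ normc_i mul1r; lra.
Qed.

Section Distance.
Variables (S : set A) (S0 : S 0).
Hypotheses (SD : forall s t, S s -> S t -> S (s + t))
  (SZ : forall k s, S s -> S (k *: s)).

Definition dist_to (x : A) : R := inf [set rnorm (x - s) | s in S].

Lemma dist_to_has_lbound x : has_lbound [set rnorm (x - s) | s in S].
Proof. by exists 0 => _ [s _ <-]; exact: rnorm_ge0. Qed.

Lemma dist_to_le x s : S s -> dist_to x <= rnorm (x - s).
Proof. by move=> Ss; apply: ge_inf; [exact: dist_to_has_lbound | exists s]. Qed.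

Lemma dist_to_le_rnorm x : dist_to x <= rnorm x.
Proof. by have := dist_to_le x S0; rewrite subr0. Qed.

Lemma dist_to_eq0 s : S s -> dist_to s = 0.
Proof.
move=> Ss; apply/eqP; rewrite eq_le; apply/andP; split.
  by have := dist_to_le s Ss; rewrite subrr /rnorm normr0.
by apply: lb_le_inf; [exists (rnorm (s - 0)), 0 | move=> _ [t _ <-]; exact: rnorm_ge0].
Qed.

Lemma dist_to_sublinear : sublinear (real_complex R) dist_to.
Proof.
apply: sublinear_inf => [x|x|x y e f [s Ss <-] [t St <-]|c x e c0 [s Ss <-]].
- by exists (rnorm (x - 0)), 0.
- exact: dist_to_has_lbound.
- exists (rnorm (x + y - (s + t))); first by exists (s + t); [exact: SD|].
  by rewrite opprD addrACA; exact: rnormD.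
- exists (rnorm (c%:C *: x - c%:C *: s)); first by exists (c%:C *: s); [exact: SZ|].
  by rewrite -scalerBr rnormZ normc_real ger0_norm // ltW.
Qed.

Lemma dist_to_gt0 x0 : ~ closure S x0 -> 0 < dist_to x0.
Proof.
move=> nx0; rewrite ltNge; apply/negP => dist0; apply: nx0.
move=> B /nbhs_ballP [e e0 eB].
have eE := ger0_complexE (ltW e0).
have e'0 : 0 < complex.Re e by rewrite -ltcR -eE.
have S_dist0 : nonempty [set rnorm (x0 - s) | s in S] by exists (rnorm (x0 - 0)), 0.
have [_ [s Ss <-] xs_lt] := inf_adherent e'0 (conj S_dist0 (dist_to_has_lbound x0)).
exists s; split=> //; apply: eB; rewrite -ball_normE /= rnormE eE ltcR.
by rewrite /dist_to in dist0; lra.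
Qed.

Lemma separating_functional x0 : ~ closure S x0 -> exists phi : A -> R[i],
  [/\ forall x y, phi (x + y) = phi x + phi y,
      forall k x, phi (k *: x) = k * phi x,
      forall s, S s -> phi s = 0,
      forall x, `|phi x| <= 2 * `|x|
    & phi x0 != 0].
Proof.
move=> nx0; have [u [lu u_le ux0]] := hahn_banach x0 dist_to_sublinear.
have uN x : u (- x) = - u x := real_linearN x lu.
have u_bound x : `|u x| <= rnorm x.
  rewrite ler_norml; have := u_le x; have := u_le (- x); rewrite uN.
  by have := dist_to_le_rnorm x; have := dist_to_le_rnorm (- x); rewrite rnormN; lra.
have uS s : S s -> u s = 0.
  move=> Ss; have SNs : S (- s) by rewrite -scaleN1r; exact: SZ.
  by have := u_le s; have := u_le (- s); rewrite uN !dist_to_eq0 //; lra.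
exists (complexify u); split.
- exact: complexifyD.
- exact: complexifyZ.
- by move=> s Ss; rewrite /complexify !uS ?mulr0 ?subr0 //; exact: SZ.
- exact: complexify_norm_le.
- apply/eqP => phi0; have := Re_complexify u x0; rewrite phi0 /= ux0.
  by move/esym/eqP; rewrite gt_eqF // dist_to_gt0.
Qed.

End Distance.
End RealNorm.

Section ProductDerivation.
Variables (K : numFieldType) (A : normedModType K) (mul : A -> A -> A).

Lemma sq_span0 : sq_span mul 0.
Proof. by exists 0%N, (fun _ => 0), (fun _ => 0), (fun _ => 0); rewrite big_ord0. Qed.

Lemma sq_span_mul a b : sq_span mul (mul a b).
Proof.
by exists 1%N, (fun _ => 1), (fun _ => a), (fun _ => b); rewrite big_ord1 scale1r.
Qed.

Lemma sq_spanZ k y : sq_span mul y -> sq_span mul (k *: y).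
Proof.
case=> n [c [a [b ->]]]; exists n, (fun i => k * c i), a, b.
by rewrite scaler_sumr; apply: eq_bigr => i _; rewrite scalerA.
Qed.

Lemma sq_spanD y z : sq_span mul y -> sq_span mul z -> sq_span mul (y + z).
Proof.
case=> [m [c [a [b ->]]]] [n [d [a' [b' ->]]]].
pose glue T (f : 'I_m -> T) (g : 'I_n -> T) i :=
  match fintype.split i with inl j => f j | inr j => g j end.
exists (m + n)%N, (glue _ c d), (glue _ a a'), (glue _ b b').
by rewrite big_split_ord /glue; congr (_ + _); apply: eq_bigr => i _;
  [rewrite (unsplitK (inl i)) | rewrite (unsplitK (inr i))].
Qed.

Variable I : set A.

Lemma product_derivation (phi : A -> K) :
  (forall x y, phi (x + y) = phi x + phi y) ->
  (forall k x, phi (k *: x) = k * phi x) ->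
  (exists M, forall x, `|phi x| <= M * `|x|) ->
  (forall a b, phi (mul a b) = 0) ->
  I_derivation mul I (fun a x => phi a * phi x).
Proof.
move=> phiD phiZ [M phi_le] phi_mul; split.
- move=> a; split=> [x y _ _|k x _|]; first by rewrite phiD mulrDr.
    by rewrite phiZ mulrCA.
  exists (`|phi a| * M) => x _; rewrite normrM -mulrA.
  by apply: ler_wpM2l => //; exact: phi_le.
- by move=> a b x _; rewrite phiD mulrDl.
- by move=> k a x _; rewrite phiZ mulrA.
- exists (M * M) => a x _; rewrite normrM.
  have -> : M * M * `|a| * `|x| = (M * `|a|) * (M * `|x|) by ring.
  by apply: ler_pM.
- by move=> a b x _; rewrite !phi_mul mul0r !mulr0 addr0.
Qed.

Lemma I_inner_diag D x : I_inner mul I D -> I x -> D x x = 0.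
Proof. by case=> f [_ Df] Ix; rewrite Df // subrr. Qed.

End ProductDerivation.

Theorem theorem3p8 (R : realType) (A : completeNormedModType R[i])
  (mul : A -> A -> A) (I : set A) :
  banach_algebra_mul mul ->
  closed_ideal mul I ->
  sq_span mul `<=` I ->
  I_weakly_amenable mul I ->
  I `<=` closure (sq_span mul).
Proof.
move=> _ _ _ amenable x0 Ix0; apply: contrapT => x0_far.
have [phi [phiD phiZ phi_sq phi_le phix0]] :=
  separating_functional (sq_span0 mul) (@sq_spanD _ _ mul) (@sq_spanZ _ _ mul) x0_far.
have Dder : I_derivation mul I (fun a x => phi a * phi x).
  apply: product_derivation => // [|a b]; first by exists 2.
  exact/phi_sq/sq_span_mul.
have := I_inner_diag (amenable _ Dder) Ix0.
by move/eqP; rewrite mulf_eq0 orbb (negbTE phix0).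
Qed.
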